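(* Let $n\ge 3$, let $[\mathcal Q:\xi]$, $[\mathcal H:\partial]$, $[\mathcal G:\delta]$ be reduced $n$-crossed complexes, let $p:\mathcal Q\to\mathcal H$ be a trivial fibration and $f:\mathcal Q\to\mathcal G$ any morphism of reduced $n$-crossed complexes, and let $\nabla^f=(p,f):\mathcal Q\to\mathcal H\times\mathcal G$ be the induced diagonal morphism. Then the canonical morphism $\iota:\mathcal Q\to\mathcal Q^{\nabla^f_n}$ into the $n$-pushout is a weak equivalence, i.e. it induces isomorphisms $\pi_k(\mathcal Q)\to\pi_k(\mathcal Q^{\nabla^f_n})$ for all $1\le k\le n$.
   Context: A reduced $n$-crossed complex $[C:\partial]$ is a sequence of groups and homomorphisms $C_n\xrightarrow{\partial_n}C_{n-1}\to\cdots\to C_2\xrightarrow{\partial_2}C_1$ together with an action of $C_1$ on each $C_k$ ($k\ge2$), written $c\mapsto c^a$, such that $\partial_2:C_2\to C_1$ is a crossed module, $C_k$ is abelian for $k\ge3$, each $\partial_k$ is $C_1$-equivariant ($C_1$ acting on itself by conjugation), $\partial_{k-1}\partial_k$ is trivial, and $\partial_2(C_2)$ acts trivially on $C_k$ for $k\ge3$. Morphisms are families of homomorphisms commuting with the differentials and compatible with the actions; products are taken degreewise. Homotopy groups: $\pi_1(C)=C_1/\partial_2(C_2)$, $\pi_k(C)=\ker\partial_k/\partial_{k+1}(C_{k+1})$ for $2\le k\le n-1$, $\pi_n(C)=\ker\partial_n$. A weak equivalence is a morphism inducing isomorphisms on all $\pi_k$, $1\le k\le n$; a fibration is a morphism surjective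 in every degree; a trivial fibration is both. Recall (proved in the paper) that a morphism $p:[\mathcal Q:\xi]\to[\mathcal H:\partial]$ is a trivial fibration iff for each $1\le k\le n$ the map $u_k:\mathcal Q_k\to\ker\xi_{k-1}\times_{\ker\partial_{k-1}}\mathcal H_k$, $x\mapsto(\xi_k(x),p_k(x))$, is surjective for $k<n$ and bijective for $k=n$; here the target is the fibre product of $p_{k-1}:\ker\xi_{k-1}\to\ker\partial_{k-1}$ and $\partial_k:\mathcal H_k\to\ker\partial_{k-1}$, with conventions $\ker\xi_0=\ker\partial_0=1$ and $\ker\xi_1=\mathcal Q_1$, $\ker\partial_1=\mathcal H_1$. The $n$-pushout: given a morphism $\nabla:[\mathcal Q:\xi]\to[\mathcal K:\kappa]$ (here $\mathcal K=\mathcal H\times\mathcal G$, $\nabla=\nabla^f=(p,f)$), $\mathcal Q^{\nabla_n}$ is the reduced $n$-crossed complex equal to $\mathcal Q$ in degrees $\le n-2$, with degree $n$ group $\mathcal K_n$ and degree $n-1$ group $P=\mathcal Q_{n-1}\times^{\mathcal Q_n}\mathcal K_n$, the pushout of $\xi_n:\mathcal Q_n\to\mathcal Q_{n-1}$ and $\nabla_n:\mathcal Q_n\to\mathcal K_n$: the quotient of the (semi)direct product $\mathcal Q_{n-1}\ltimes\mathcal K_n$ (for $n=3$, $\mathcal Q_2$ acts on $\mathcal K_3$ via $\nabla_1\circ\xi_2$ and the $\mathcal K_1$-action; for $n\ge4$ the product is direct) by the normal subgroup of elements $(\xi_n(x)^{-1},\nabla_n(x))$, $x\in\mathcal Q_n$.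 Elements of $P$ are written $[a,(b,c)]$. The differentials are $i_2:\mathcal K_n\to P$, $(b,c)\mapsto[1,(b,c)]$, and $P\to\mathcal Q_{n-2}$, $[a,(b,c)]\mapsto\xi_{n-1}(a)$. The canonical morphism $\iota:\mathcal Q\to\mathcal Q^{\nabla_n}$ is $\nabla_n$ in degree $n$, $a\mapsto[a,(1,1)]$ in degree $n-1$, and the identity below; the canonical morphism $\rho:\mathcal Q^{\nabla_n}\to\mathcal K$ is the identity in degree $n$, $[a,(b,c)]\mapsto\nabla_{n-1}(a)\kappa_n(b,c)$ in degree $n-1$, and $\nabla_k$ in degrees $k\le n-2$; thus $\rho\circ\iota=\nabla$. *)

(* Data and axioms are kept separate so
   that constructions (products, semidirect products, quotients, the
   n-pushout) are definable on raw data; the axioms are stated as Props. *)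
From Stdlib Require Import ClassicalEpsilon.
From mathcomp Require Import ssreflect ssrfun ssrbool eqtype ssrnat.

Set Implicit Arguments.
Unset Strict Implicit.
Unset Printing Implicit Defensive.

Record group := Group {
  gcar :> Type;
  gmul : gcar -> gcar -> gcar;
  gone : gcar;
  ginv : gcar -> gcar }.
Arguments gmul {g}.
Arguments gone {g}.
Arguments ginv {g}.

Definition is_group (G : group) : Prop :=
  [/\ (forall x y z : G, gmul x (gmul y z) = gmul (gmul x y) z),
      (forall x : G, gmul gone x = x),
      (forall x : G, gmul x gone = x),
      (forall x : G, gmul (ginv x) x = gone)
    & (forall x : G, gmul x (ginv x) = gone)].

Definition is_hom (G H : group) (f : G -> H) : Prop :=
  forall x y : G, f (gmul x y) = gmul (f x) (f y).

Definition is_abelian (G : group) : Prop :=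
  forall x y : G, gmul x y = gmul y x.

Definition prod_group (G H : group) : group :=
  @Group (G * H)%type
    (fun x y => (gmul x.1 y.1, gmul x.2 y.2))
    (gone, gone)
    (fun x => (ginv x.1, ginv x.2)).

Definition is_normal_subgroup (G : group) (M : G -> Prop) : Prop :=
  [/\ M gone,
      (forall x y, M x -> M y -> M (gmul x y)),
      (forall x, M x -> M (ginv x))
    & (forall x g, M x -> M (gmul (ginv g) (gmul x g)))].

Definition normal_closure (G : group) (S : G -> Prop) : G -> Prop :=
  fun z => forall M : G -> Prop, is_normal_subgroup M ->
             (forall s, S s -> M s) -> M z.

Definition qrel (G : group) (N : G -> Prop) (x y : G) : Prop :=
  N (gmul (ginv x) y).
Definition qcar (G : group) (N : G -> Prop) : Type :=
  {c : G -> Prop | exists x, c = qrel N x}.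
Definition qcls (G : group) (N : G -> Prop) (x : G) : qcar N :=
  exist _ (qrel N x) (ex_intro _ x erefl).
Definition qrepr (G : group) (N : G -> Prop) (c : qcar N) : G :=
  proj1_sig (constructive_indefinite_description _ (proj2_sig c)).
Definition quot_group (G : group) (N : G -> Prop) : group :=
  @Group (qcar N)
    (fun c d => qcls N (gmul (qrepr c) (qrepr d)))
    (qcls N gone)
    (fun c => qcls N (ginv (qrepr c))).

(* Reduced n-crossed complexes (data), with n = d + 2.                 *)
(* Degrees are indexed TOP-DOWN: grp i = C_(n-i), for 0 <= i <= d+1,   *)
(* so grp 0 = C_n, grp d = C_2, grp d.+1 = C_1.                        *)
(*   dif i : C_(n-i) -> C_(n-i-1)  is  the differential  ∂_(n-i)       *)
(*           (meaningful for i <= d, i.e. ∂_k with 2 <= k <= n);       *)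
(*   act i c a = c^a, the (right) action of a ∈ C_1 on c ∈ C_(n-i)     *)
(*           (meaningful for i <= d, i.e. on C_k with k >= 2).         *)
(* Values outside these ranges are irrelevant junk.                    *)

Record rcc (d : nat) := RCC {
  grp : nat -> group;
  dif : forall i, grp i -> grp i.+1;
  act : forall i, grp i -> grp d.+1 -> grp i }.
Arguments grp {d} r i.
Arguments dif {d} r i _.
Arguments act {d} r i _ _.

Record is_rcc (d : nat) (C : rcc d) : Prop := {
  rcc_group : forall i, i <= d.+1 -> is_group (grp C i);
  rcc_dif_hom : forall i, i <= d -> is_hom (dif C i);
  rcc_act_hom : forall i a, i <= d -> is_hom (fun c => act C i c a);
  rcc_act_one : forall i c, i <= d -> act C i c gone = c;
  rcc_act_mul : forall i c a b, i <= d ->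
      act C i c (gmul a b) = act C i (act C i c a) b;
  rcc_xmod_equiv : forall (c : grp C d) (a : grp C d.+1),
      dif C d (act C d c a) = gmul (ginv a) (gmul (dif C d c) a);
  rcc_xmod_peiffer : forall c c' : grp C d,
      act C d c' (dif C d c) = gmul (ginv c) (gmul c' c);
  rcc_abelian : forall i, i < d -> is_abelian (grp C i);
  rcc_dif_equiv : forall i c a, i < d ->
      dif C i (act C i c a) = act C i.+1 (dif C i c) a;
  rcc_difdif : forall i c, i < d -> dif C i.+1 (dif C i c) = gone;
  rcc_triv_act : forall i c x, i < d -> act C i c (dif C d x) = c }.

Definition rmor (d : nat) (C D : rcc d) := forall i, grp C i -> grp D i.

Definition is_rmor (d : nat) (C D : rcc d) (f : rmor C D) : Prop :=
  [/\ (forall i, i <= d.+1 -> is_hom (f i)),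
      (forall i c, i <= d -> f i.+1 (dif C i c) = dif D i (f i c))
    & (forall i c a, i <= d -> f i (act C i c a) = act D i (f i c) (f d.+1 a))].

Definition prod_rcc (d : nat) (H G : rcc d) : rcc d :=
  @RCC d (fun i => prod_group (grp H i) (grp G i))
         (fun i x => (dif H i x.1, dif G i x.2))
         (fun i x a => (act H i x.1 a.1, act G i x.2 a.2)).

Definition diag (d : nat) (Q H G : rcc d) (p : rmor Q H) (f : rmor Q G)
  : rmor Q (prod_rcc H G) := fun i x => (p i x, f i x).

Definition kerP (A B : group) (f : A -> B) : A -> Prop := fun x => f x = gone.
Definition imP (A B : group) (f : A -> B) : B -> Prop := fun y => exists x, f x = y.

Definition coset_eq (G : group) (I : G -> Prop) (x y : G) : Prop :=
  I (gmul x (ginv y)).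

(* g : A -> B induces a bijection  Ka/Ia -> Kb/Ib  (Ia ⊆ Ka, Ib ⊆ Kb);
   for homomorphisms this is the statement that the induced
   homomorphism of quotient groups is an isomorphism. *)
Definition induces_bij (A B : group) (Ka Ia : A -> Prop) (Kb Ib : B -> Prop)
  (g : A -> B) : Prop :=
  (forall y, Kb y -> exists x, Ka x /\ coset_eq Ib (g x) y) /\
  (forall x x', Ka x -> Ka x' -> coset_eq Ib (g x) (g x') -> coset_eq Ia x x').

(* f induces isomorphisms on all π_k, 1 <= k <= n (n = d+2):
   π_n = ker ∂_n (index 0);
   π_k = ker ∂_k / ∂_(k+1)(C_(k+1)), 2 <= k <= n-1 (index i.+1, i < d);
   π_1 = C_1 / ∂_2(C_2) (index d.+1). *)
Definition is_weq (d : nat) (C D : rcc d) (f : rmor C D) : Prop :=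
  [/\ induces_bij (kerP (dif C 0)) (fun x => x = gone)
                  (kerP (dif D 0)) (fun y => y = gone) (f 0),
      (forall i, i < d ->
         induces_bij (kerP (dif C i.+1)) (imP (dif C i))
                     (kerP (dif D i.+1)) (imP (dif D i)) (f i.+1))
    & induces_bij (fun _ => True) (imP (dif C d))
                  (fun _ => True) (imP (dif D d)) (f d.+1)].

Definition is_fib (d : nat) (C D : rcc d) (p : rmor C D) : Prop :=
  forall i, i <= d.+1 -> forall y : grp D i, exists x, p i x = y.

Definition is_triv_fib (d : nat) (C D : rcc d) (p : rmor C D) : Prop :=
  is_rmor p /\ is_fib p /\ is_weq p.

(* The n-pushout, for n = m + 3 (i.e. d = m + 1).                      *)
(* Indices: 0 ~ degree n, 1 ~ degree n-1, 2 ~ degree n-2, m.+2 ~ C_1.  *)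

Unset Implicit Arguments.
Section Pushout.
Variables (m : nat) (Q K : rcc m.+1) (nab : rmor Q K).

(* action of Q_(n-1) on K_n used in the semidirect product:
   for n = 3, via ∇_1 ∘ ξ_2 and the K_1-action; for n >= 4, trivial *)
Definition sd_act : grp Q 1 -> grp K 0 -> grp K 0 :=
  (match m as m0 return
     forall (Q' K' : rcc m0.+1), rmor Q' K' -> grp Q' 1 -> grp K' 0 -> grp K' 0
   with
   | 0 => fun Q' K' nab' a k => act K' 0 k (nab' 2 (dif Q' 1 a))
   | _.+1 => fun _ _ _ _ k => k
   end) Q K nab.

Definition sd_group : group :=
  @Group (grp Q 1 * grp K 0)%type
    (fun x y => (gmul x.1 y.1, gmul (sd_act y.1 x.2) y.2))
    (gone, gone)
    (fun x => (ginv x.1, sd_act (ginv x.1) (ginv x.2))).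

Definition po_gens : sd_group -> Prop :=
  fun z => exists x : grp Q 0, z = (ginv (dif Q 0 x), nab 0 x).

Definition po_N : sd_group -> Prop := normal_closure po_gens.

(* P = Q_(n-1) ×^(Q_n) K_n ; its elements qcls (a,k) are written [a,k] *)
Definition po_P : group := quot_group po_N.

Definition po_grp (i : nat) : group :=
  match i with
  | 0 => grp K 0
  | 1 => po_P
  | i'.+2 => grp Q i'.+2
  end.

Definition po_dif (i : nat) : po_grp i -> po_grp i.+1 :=
  match i as i0 return po_grp i0 -> po_grp i0.+1 with
  | 0 => fun k => qcls po_N (gone, k)
  | 1 => fun c => dif Q 1 (qrepr c).1
  | i'.+2 => dif Q i'.+2
  end.

Definition po_act (i : nat) : po_grp i -> grp Q m.+2 -> po_grp i :=
  match i as i0 return po_grp i0 -> grp Q m.+2 -> po_grp i0 with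
  | 0 => fun k a => act K 0 k (nab m.+2 a)
  | 1 => fun c a => qcls po_N (act Q 1 (qrepr c).1 a,
                               act K 0 (qrepr c).2 (nab m.+2 a))
  | i'.+2 => fun c a => act Q i'.+2 c a
  end.

Definition pushout : rcc m.+1 := @RCC m.+1 po_grp po_dif po_act.

Definition po_iota : rmor Q pushout :=
  fun i => match i as i0 return grp Q i0 -> po_grp i0 with
           | 0 => nab 0
           | 1 => fun a => qcls po_N (a, gone)
           | i'.+2 => fun x => x
           end.

End Pushout.

Arguments pushout {m Q K} nab.
Arguments po_iota {m Q K} nab i _.

(* The elements (ξ_n(x)^-1, ∇_n(x)) of Q_(n-1) ⋉ K_n already form a normal
   subgroup: they are closed under products because K_n is abelian and
   ξ_n(Q_n) acts trivially on K_n, and under conjugation by the Peiffer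
   identity of ξ_2 when n = 3, resp. because Q_(n-1) is abelian when n >= 4.
   So [a,k] is trivial in P exactly when (a,k) is such an element.  Then
   ker(i_2) consists of the ∇_n(x) with ξ_n(x) = 1, on which ∇_n = (p_n, f_n)
   is injective because p induces an isomorphism on π_n; every class of
   ker(P -> Q_(n-2)) is [a,1] modulo the image of i_2, and [a,1] lies in that
   image only if a lies in the image of ξ_n; finally P -> Q_(n-2) has the same
   image as ξ_(n-1), so ι is the identity on the lower homotopy groups. *)
From Stdlib Require Import FunctionalExtensionality PropExtensionality.
From Stdlib Require Import ProofIrrelevance ClassicalEpsilon.
From mathcomp Require Import ssreflect ssrfun ssrbool eqtype ssrnat.

Set Implicit Arguments.
Unset Strict Implicit.

Section GroupTheory.
Variables (G : group) (hG : is_group G).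
Implicit Types x y z : G.

Lemma mulgA x y z : gmul x (gmul y z) = gmul (gmul x y) z. Proof. by case: hG. Qed.
Lemma mul1g x : gmul gone x = x. Proof. by case: hG. Qed.
Lemma mulg1 x : gmul x gone = x. Proof. by case: hG. Qed.
Lemma mulVg x : gmul (ginv x) x = gone. Proof. by case: hG. Qed.
Lemma mulgV x : gmul x (ginv x) = gone. Proof. by case: hG. Qed.

Lemma mulKg x y : gmul (ginv x) (gmul x y) = y.
Proof. by rewrite mulgA mulVg mul1g. Qed.

Lemma mulKVg x y : gmul x (gmul (ginv x) y) = y.
Proof. by rewrite mulgA mulgV mul1g. Qed.

Lemma mulgI x y z : gmul x y = gmul x z -> y = z.
Proof. by move/(f_equal (gmul (ginv x))); rewrite !mulKg. Qed.

Lemma invg_uniq x y : gmul x y = gone -> y = ginv x.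
Proof. by move=> E; rewrite -(mulKg x y) E mulg1. Qed.

Lemma divg1_eq x y : gmul x (ginv y) = gone -> x = y.
Proof. by move=> E; rewrite -(mulg1 x) -(mulVg y) mulgA E mul1g. Qed.

Lemma ldivg1_eq x y : gmul (ginv x) y = gone -> x = y.
Proof. by move=> E; rewrite -(mulKVg x y) E mulg1. Qed.

Lemma invgK x : ginv (ginv x) = x.
Proof. by rewrite -(invg_uniq (mulVg x)). Qed.

Lemma invg1 : ginv (@gone G) = gone.
Proof. by rewrite -(invg_uniq (mul1g gone)). Qed.

Lemma invgM x y : ginv (gmul x y) = gmul (ginv y) (ginv x).
Proof.
symmetry; apply: invg_uniq.
by rewrite -mulgA (mulgA y) mulgV mul1g mulgV.
Qed.

Lemma invg_inj x y : ginv x = ginv y -> x = y.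
Proof. by move=> E; rewrite -(invgK x) E invgK. Qed.

Lemma idemg_eq1 x : gmul x x = x -> x = gone.
Proof. by move=> E; apply: (@mulgI x); rewrite E mulg1. Qed.

End GroupTheory.

Section Morphisms.
Variables (A B : group) (hA : is_group A) (hB : is_group B).
Variables (f : A -> B) (hf : is_hom f).

Lemma morph1 : f gone = gone.
Proof. by apply: (idemg_eq1 hB); rewrite -hf mul1g. Qed.

Lemma morphV x : f (ginv x) = ginv (f x).
Proof. by apply: (invg_uniq hB); rewrite -hf mulgV // morph1. Qed.

End Morphisms.

Lemma prod_is_group (G H : group) :
  is_group G -> is_group H -> is_group (prod_group G H).
Proof.
move=> hG hH; split=> /=.
- by move=> [x1 x2] [y1 y2] [z1 z2] /=; rewrite (mulgA hG) (mulgA hH).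
- by move=> [x1 x2] /=; rewrite (mul1g hG) (mul1g hH).
- by move=> [x1 x2] /=; rewrite (mulg1 hG) (mulg1 hH).
- by move=> [x1 x2] /=; rewrite (mulVg hG) (mulVg hH).
- by move=> [x1 x2] /=; rewrite (mulgV hG) (mulgV hH).
Qed.

Section SemidirectProduct.
Variables (A B : group) (hA : is_group A) (hB : is_group B).
Variable s : A -> B -> B.

Definition is_aut_action : Prop :=
  [/\ forall a, is_hom (s a), forall k, s gone k = k
    & forall a a' k, s (gmul a a') k = s a' (s a k)].

Definition sdprod_group : group :=
  @Group (A * B)%type (fun x y => (gmul x.1 y.1, gmul (s y.1 x.2) y.2))
    (gone, gone) (fun x => (ginv x.1, s (ginv x.1) (ginv x.2))).

Hypothesis hs : is_aut_action.

Lemma sdprod_is_group : is_group sdprod_group.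
Proof.
have [s_hom s_one s_mul] := hs.
have s1 a : s a gone = gone by apply: morph1.
split=> /=.
- by move=> [x1 x2] [y1 y2] [z1 z2] /=; rewrite (mulgA hA) s_mul s_hom (mulgA hB).
- by move=> [x1 x2] /=; rewrite (mul1g hA) s1 (mul1g hB).
- by move=> [x1 x2] /=; rewrite (mulg1 hA) s_one (mulg1 hB).
- by move=> [x1 x2] /=; rewrite (mulVg hA) -s_mul (mulVg hA) s_one (mulVg hB).
- by move=> [x1 x2] /=; rewrite (mulgV hA) -s_hom (mulgV hB) s1.
Qed.

Lemma sdprod_conj (a b : A) (k c : B) :
  is_abelian B -> (forall k, s b k = k) ->
  @gmul sdprod_group (@ginv sdprod_group (a, k)) (@gmul sdprod_group (b, c) (a, k))
  = (gmul (ginv a) (gmul b a), s a c).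
Proof.
have [_ s_one s_mul] := hs; move=> B_ab sb /=.
by rewrite s_mul sb -s_mul (mulVg hA) s_one (B_ab (s a c) k) (mulKg hB).
Qed.

End SemidirectProduct.

Section NormalSubgroups.
Variables (G : group) (N : G -> Prop) (hN : is_normal_subgroup N).

Lemma nsg1 : N gone. Proof. by case: hN. Qed.
Lemma nsgM x y : N x -> N y -> N (gmul x y). Proof. by case: hN => _ hM _ _; apply: hM. Qed.
Lemma nsgV x : N x -> N (ginv x). Proof. by case: hN => _ _ hV _; apply: hV. Qed.
Lemma nsgJ x g : N x -> N (gmul (ginv g) (gmul x g)).
Proof. by case: hN => _ _ _ hJ; apply: hJ. Qed.

End NormalSubgroups.

Lemma normal_closure_normal (G : group) (S : G -> Prop) :
  is_normal_subgroup (normal_closure S).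
Proof.
split.
- by move=> M hM _; apply: nsg1.
- by move=> x y Hx Hy M hM hS; apply: nsgM (Hx M hM hS) (Hy M hM hS).
- by move=> x Hx M hM hS; apply: nsgV (Hx M hM hS).
- by move=> x g Hx M hM hS; apply: nsgJ (Hx M hM hS).
Qed.

Lemma normal_closure_id (G : group) (S : G -> Prop) :
  is_normal_subgroup S -> forall z, normal_closure S z <-> S z.
Proof. by move=> hS z; split=> [H | H M _ hSM]; [apply: H | apply: hSM]. Qed.

Section Quotient.
Variables (G : group) (hG : is_group G) (N : G -> Prop) (hN : is_normal_subgroup N).

Lemma qcls_repr (c : qcar N) : qcls N (qrepr c) = c.
Proof.
apply: eq_sig_hprop => [? ? ?|/=]; first exact: proof_irrelevance.
by rewrite /qrepr; case: (constructive_indefinite_description _ _).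
Qed.

Lemma qcls_eq x y : qcls N x = qcls N y <-> N (gmul (ginv x) y).
Proof.
split.
- move/(f_equal (@proj1_sig _ _)) => /= E.
  have : qrel N y y by rewrite /qrel (mulVg hG); apply: nsg1.
  by rewrite -E.
- move=> Nxy; apply: eq_sig_hprop => [? ? ?|/=]; first exact: proof_irrelevance.
  apply: functional_extensionality => w; apply: propositional_extensionality.
  rewrite /qrel; split=> H.
  + by have := nsgM hN (nsgV hN Nxy) H; rewrite (invgM hG) (invgK hG) -(mulgA hG) (mulKVg hG).
  + by have := nsgM hN Nxy H; rewrite -(mulgA hG) (mulKVg hG).
Qed.

Lemma qcls_eq1 x : qcls N x = qcls N gone <-> N x.
Proof.
rewrite qcls_eq (mulg1 hG); split=> H; last exact: nsgV.
by rewrite -(invgK hG x); apply: nsgV.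
Qed.

Lemma qclsM x y :
  @gmul (quot_group N) (qcls N x) (qcls N y) = qcls N (gmul x y).
Proof.
rewrite /=; move: (qcls_repr (qcls N x)) (qcls_repr (qcls N y)).
move: (qrepr (qcls N x)) (qrepr (qcls N y)) => r1 r2 /qcls_eq N1 /qcls_eq N2.
apply/qcls_eq; have := nsgM hN (nsgJ hN r2 N1) N2.
by rewrite (invgM hG) -!(mulgA hG) (mulKVg hG).
Qed.

Lemma qclsV x : @ginv (quot_group N) (qcls N x) = qcls N (ginv x).
Proof.
rewrite /=; move: (qcls_repr (qcls N x)); move: (qrepr (qcls N x)) => r /qcls_eq N1.
apply/qcls_eq; have := nsgJ hN (ginv x) (nsgV hN N1).
by rewrite (invgK hG) (invgK hG) (invgM hG) (invgK hG) -!(mulgA hG) (mulKVg hG).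
Qed.

End Quotient.

Lemma prod_is_rcc d (H G : rcc d) : is_rcc H -> is_rcc G -> is_rcc (prod_rcc H G).
Proof.
move=> hH hG; split.
- by move=> i hi; apply: prod_is_group; [apply: rcc_group hH i hi | apply: rcc_group hG i hi].
- by move=> i hi [x1 x2] [y1 y2] /=; rewrite (rcc_dif_hom hH hi) (rcc_dif_hom hG hi).
- move=> i [a1 a2] hi [x1 x2] [y1 y2] /=.
  by rewrite (rcc_act_hom hH a1 hi) (rcc_act_hom hG a2 hi).
- by move=> i [x1 x2] hi /=; rewrite (rcc_act_one hH x1 hi) (rcc_act_one hG x2 hi).
- move=> i [x1 x2] [a1 a2] [b1 b2] hi /=.
  by rewrite (rcc_act_mul hH x1 a1 b1 hi) (rcc_act_mul hG x2 a2 b2 hi).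
- by move=> [x1 x2] [a1 a2] /=; rewrite (rcc_xmod_equiv hH) (rcc_xmod_equiv hG).
- by move=> [x1 x2] [a1 a2] /=; rewrite (rcc_xmod_peiffer hH) (rcc_xmod_peiffer hG).
- by move=> i hi [x1 x2] [a1 a2] /=; rewrite (rcc_abelian hH hi) (rcc_abelian hG hi).
- move=> i [x1 x2] [a1 a2] hi /=.
  by rewrite (rcc_dif_equiv hH x1 a1 hi) (rcc_dif_equiv hG x2 a2 hi).
- by move=> i [x1 x2] hi /=; rewrite (rcc_difdif hH x1 hi) (rcc_difdif hG x2 hi).
- move=> i [x1 x2] [a1 a2] hi /=.
  by rewrite (rcc_triv_act hH x1 a1 hi) (rcc_triv_act hG x2 a2 hi).
Qed.

Lemma diag_is_rmor d (Q H G : rcc d) (p : rmor Q H) (f : rmor Q G) :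
  is_rmor p -> is_rmor f -> is_rmor (diag p f).
Proof.
case=> p_hom p_dif p_act [f_hom f_dif f_act]; split; rewrite /diag /=.
- by move=> i hi x y; rewrite (p_hom i hi) (f_hom i hi).
- by move=> i c hi; rewrite (p_dif i c hi) (f_dif i c hi).
- by move=> i c a hi; rewrite (p_act i c a hi) (f_act i c a hi).
Qed.

Lemma triv_fib_inj_top d (Q H : rcc d) (p : rmor Q H) :
  is_rcc Q -> is_rcc H -> is_triv_fib p ->
  forall x x', dif Q 0 x = gone -> dif Q 0 x' = gone -> p 0 x = p 0 x' -> x = x'.
Proof.
move=> hQ hH [_ [_ [[_ p_inj] _ _]]] x x' Hx Hx' E.
apply: (divg1_eq (rcc_group hQ (i:=0) isT)); apply: p_inj => //.
by rewrite /coset_eq E (mulgV (rcc_group hH (i:=0) isT)).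
Qed.

Lemma id_induces_bij (G : group) (hG : is_group G) (Ka Ia Ib : G -> Prop) :
  (forall z, Ia z <-> Ib z) -> Ia gone -> induces_bij Ka Ia Ka Ib (fun x => x).
Proof.
move=> I_eq I1; split.
- by move=> y Hy; exists y; split => //; rewrite /coset_eq (mulgV hG) -I_eq.
- by move=> x x' _ _; rewrite /coset_eq I_eq.
Qed.

(* Otherwise the degree argument of the section variable [nab] becomes implicit. *)
Unset Implicit Arguments.
Section PushoutTheory.
Variables (m : nat) (Q K : rcc m.+1) (nab : rmor Q K).
Hypotheses (hQ : is_rcc Q) (hK : is_rcc K) (hnab : is_rmor nab).

Local Notation s := (sd_act m Q K nab).
Local Notation N := (po_N m Q K nab).
Local Notation gens := (po_gens m Q K nab).

Lemma sd_act_aut : is_aut_action s.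
Proof.
case: m Q K nab hQ hK hnab => [|m'] Q' K' nab' hQ' hK' [nab_hom _ _]; split=> //=.
- by move=> a x y; apply: (rcc_act_hom hK' _ (i:=0) isT).
- move=> k; rewrite (morph1 (rcc_group hQ' (i:=1) isT) (rcc_group hQ' (i:=2) isT)
                           (rcc_dif_hom hQ' (i:=1) isT)).
  rewrite (morph1 (rcc_group hQ' (i:=2) isT) (rcc_group hK' (i:=2) isT) (nab_hom 2 isT)).
  exact: (rcc_act_one hK' (i:=0) k isT).
- move=> a a' k; rewrite (rcc_dif_hom hQ' (i:=1) isT) (nab_hom 2 isT).
  exact: (rcc_act_mul hK' (i:=0) _ _ _ isT).
Qed.

Lemma sd_act_dif y k : s (dif Q 0 y) k = k.
Proof.
case: m Q K nab hQ hK hnab y k => [|m'] Q' K' nab' hQ' hK' [nab_hom _ _] y k //=.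
rewrite (rcc_difdif hQ' (i:=0) y isT).
rewrite (morph1 (rcc_group hQ' (i:=2) isT) (rcc_group hK' (i:=2) isT) (nab_hom 2 isT)).
exact: (rcc_act_one hK' (i:=0) k isT).
Qed.

Lemma sd_act_nab a x : exists y,
  dif Q 0 y = gmul (ginv a) (gmul (dif Q 0 x) a) /\ nab 0 y = s a (nab 0 x).
Proof.
case: m Q K nab hQ hK hnab a x => [|m'] Q' K' nab' hQ' hK' [_ _ nab_act] a x /=.
- (* n = 3: by the Peiffer identity, conjugating by a is acting by ξ_2 a *)
  exists (act Q' 0 x (dif Q' 1 a)); split; last exact: nab_act 0 x _ isT.
  by rewrite (rcc_dif_equiv hQ' (i:=0) x _ isT) (rcc_xmod_peiffer hQ').
- exists x; split=> //.
  by rewrite (rcc_abelian hQ' (i:=1) isT _ a) (mulKg (rcc_group hQ' (i:=1) isT)).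
Qed.

Let hQ0 : is_group (grp Q 0) := rcc_group hQ (i:=0) isT.
Let hQ1 : is_group (grp Q 1) := rcc_group hQ (i:=1) isT.
Let hQ2 : is_group (grp Q 2) := rcc_group hQ (i:=2) isT.
Let hK0 : is_group (grp K 0) := rcc_group hK (i:=0) isT.
Let hS : is_group (sd_group m Q K nab) := sdprod_is_group hQ1 hK0 sd_act_aut.
Let dif0_hom : is_hom (dif Q 0) := rcc_dif_hom hQ (i:=0) isT.
Let dif1_hom : is_hom (dif Q 1) := rcc_dif_hom hQ (i:=1) isT.
Let nab0_hom : is_hom (nab 0). Proof. by case: hnab => h _ _; apply: h. Qed.

Lemma po_gens_normal : is_normal_subgroup gens.
Proof.
have difV := morphV hQ0 hQ1 dif0_hom; split.
- exists gone; rewrite (morph1 hQ0 hQ1 dif0_hom) (invg1 hQ1) (morph1 hQ0 hK0 nab0_hom) //.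
- move=> _ _ [x ->] [y ->] /=; exists (gmul y x).
  rewrite dif0_hom nab0_hom (invgM hQ1) -!difV sd_act_dif.
  by rewrite (rcc_abelian hK (i:=0) isT (nab 0 x)).
- move=> _ [x ->] /=; exists (ginv x).
  by rewrite (invgK hQ1) sd_act_dif (morphV hQ0 hK0 nab0_hom) difV (invgK hQ1).
- move=> _ [a k] [x ->]; rewrite -difV.
  rewrite (sdprod_conj hQ1 hK0 sd_act_aut a k _ (rcc_abelian hK (i:=0) isT) (sd_act_dif _)).
  have [y [Ey Ny]] := sd_act_nab a x; exists y.
  by rewrite Ny difV Ey !(invgM hQ1) (invgK hQ1) !(mulgA hQ1).
Qed.

Let hN : is_normal_subgroup N := normal_closure_normal _.

Lemma po_N_gens z : N z <-> gens z.
Proof. exact: normal_closure_id po_gens_normal z. Qed.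

Lemma po_cls_eq1 (z : sd_group m Q K nab) : qcls N z = qcls N gone <-> gens z.
Proof. by rewrite (qcls_eq1 hS hN) po_N_gens. Qed.

Lemma po_cls_eq (z z' : sd_group m Q K nab) :
  qcls N z = qcls N z' <-> gens (gmul (ginv z) z').
Proof. by rewrite (qcls_eq hS hN) po_N_gens. Qed.

Lemma po_dif_im j (z : grp Q j.+2) :
  imP (dif (pushout nab) j.+1) z <-> imP (dif Q j.+1) z.
Proof.
case: j z => [|j] z //; split=> [[c <-] | [a <-]]; first by exists (qrepr c).1.
exists (qcls N (a, gone)) => /=.
move: (qcls_repr (qcls N (a, gone))); case: (qrepr _) => a' k'.
move/po_cls_eq => [y /= [Ey _]]; apply: (ldivg1_eq hQ2).
rewrite -(morphV hQ1 hQ2 dif1_hom) -dif1_hom Ey (morphV hQ1 hQ2 dif1_hom).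
by rewrite (rcc_difdif hQ (i:=0) y isT) (invg1 hQ2).
Qed.

Lemma po_iota_bij_top :
  (forall x x', dif Q 0 x = gone -> dif Q 0 x' = gone -> nab 0 x = nab 0 x' -> x = x') ->
  induces_bij (kerP (dif Q 0)) (fun x => x = gone)
              (kerP (dif (pushout nab) 0)) (fun y => y = gone) (po_iota nab 0).
Proof.
move=> nab_inj; split.
- move=> k /po_cls_eq1 [x [Ex Ek]]; exists x; split.
    by apply: (invg_inj hQ1); rewrite -Ex (invg1 hQ1).
  by rewrite /coset_eq /= Ek (mulgV hK0).
- move=> x x' Hx Hx' /(divg1_eq hK0) E.
  by rewrite /coset_eq (nab_inj x x' Hx Hx' E) (mulgV hQ0).
Qed.

Lemma po_iota_bij_sub :
  induces_bij (kerP (dif Q 1)) (imP (dif Q 0))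
              (kerP (dif (pushout nab) 1)) (imP (dif (pushout nab) 0)) (po_iota nab 1).
Proof.
split.
- move=> c; rewrite /kerP /= -{2}(qcls_repr c); case: (qrepr c) => a k /= Ha.
  exists a; split=> //; rewrite /coset_eq (qclsV hS hN) (qclsM hS hN).
  exists (s (ginv a) (ginv k)); congr (qcls _ _) => /=.
  have [s_hom _ _] := sd_act_aut.
  by rewrite (mulgV hQ1) (morph1 hK0 hK0 (s_hom _)) (mul1g hK0).
- move=> a a' _ _; rewrite /coset_eq (qclsV hS hN) (qclsM hS hN).
  case=> k /po_cls_eq [y /= [Ey _]]; exists (ginv y).
  by rewrite (morphV hQ0 hQ1 dif0_hom) -Ey (invg1 hQ1) (mul1g hQ1).
Qed.

Lemma po_iota_weq :
  (forall x x', dif Q 0 x = gone -> dif Q 0 x' = gone -> nab 0 x = nab 0 x' -> x = x') ->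
  is_weq (po_iota nab).
Proof.
move=> nab_inj; split; first exact: po_iota_bij_top.
- case=> [|i] hi; first exact: po_iota_bij_sub.
  apply: (id_induces_bij (rcc_group hQ (i:=i.+2) (leqW hi))) => [z|].
    by rewrite po_dif_im.
  exists gone; apply: (morph1 (rcc_group hQ (i:=i.+1) (ltnW (leqW hi)))
                              (rcc_group hQ (leqW hi))).
  exact: (rcc_dif_hom hQ (ltnW hi)).
- apply: (id_induces_bij (rcc_group hQ (i:=m.+2) (leqnn _))) => [z|].
    by rewrite po_dif_im.
  exists gone; apply: (morph1 (rcc_group hQ (i:=m.+1) (leqnSn _))
                              (rcc_group hQ (leqnn _))).
  exact: (rcc_dif_hom hQ (leqnn _)).
Qed.

End PushoutTheory.

Theorem mainTheorem1 (m : nat) (Q H G : rcc m.+1)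
    (p : rmor Q H) (f : rmor Q G) :
  is_rcc Q -> is_rcc H -> is_rcc G ->
  is_triv_fib p -> is_rmor f ->
  is_weq (po_iota (diag p f)).
Proof.
move=> hQ hH hG hp hf.
have p_rmor : is_rmor p by case: hp.
apply: (po_iota_weq _ _ _ _ hQ (prod_is_rcc hH hG) (diag_is_rmor p_rmor hf)).
move=> x x' Hx Hx' [E _].
exact: triv_fib_inj_top hQ hH hp x x' Hx Hx' E.
Qed.
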